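(* Let $(E,\langle\cdot,\cdot\rangle,\rho,\circ)$ be a pre-Courant algebroid over $M$ with Jacobiator $J$. For every $f\in C^\infty(M)$ and $e_2,e_3\in\Gamma(E)$, $J(\mathcal Df,e_2,e_3)=0$.
   Context: A Courant vector bundle over a smooth manifold $M$ is a vector bundle $E\to M$ with a fibrewise nondegenerate symmetric bilinear form $\langle\cdot,\cdot\rangle$ and a bundle map $\rho:E\to TM$ such that $\rho\circ\rho^*=0$, where $\rho^*:T^*M\to E^*\cong E$ is the dual of $\rho$ followed by the identification $E^*\cong E$ via $\langle\cdot,\cdot\rangle$. A pre-Courant algebroid structure on it is an $\mathbb R$-bilinear operation $\circ$ on $\Gamma(E)$ such that for all $e_1,e_2,e_3\in\Gamma(E)$: (i) $\rho(e_1\circ e_2)=[\rho(e_1),\rho(e_2)]$; (ii) $\langle e_1\circ e_1,e_2\rangle=\frac12\rho(e_2)\langle e_1,e_1\rangle$; (iii) $\rho(e_1)\langle e_2,e_3\rangle=\langle e_1\circ e_2,e_3\rangle+\langle e_2,e_1\circ e_3\rangle$. Define $\mathcal D:C^\infty(M)\to\Gamma(E)$ by $\langle\mathcal Df,e\rangle=\rho(e)f$. The Jacobiator is $J(e_1,e_2,e_3)=e_1\circ(e_2\circ e_3)-(e_1\circ e_2)\circ e_3-e_2\circ(e_1\circ e_3)$. *)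

(* Algebraic model of a pre-Courant algebroid:
   A  : C^oo(M), a commutative R-algebra (R a real field, e.g. the reals);
   E  : Gamma(E), a module over A;
   vector fields are represented by their action on functions, i.e. as
   R-linear derivations of A (which is exactly what vector fields are). *)
From HB Require Import structures.
From mathcomp Require Import all_boot all_order all_algebra.
Set Implicit Arguments. Unset Strict Implicit. Unset Printing Implicit Defensive.
Import Order.TTheory GRing.Theory Num.Theory.
Local Open Scope ring_scope.

Record preCourant (R : realFieldType) (A : comAlgType R) (E : lmodType A) := PreCourant {
  pair : E -> E -> A;
  pair_sym : forall e e', pair e e' = pair e' e;
  pairD : forall e e' e'', pair (e + e') e'' = pair e e'' + pair e' e'';
  pairZ : forall (g : A) e e', pair (g *: e) e' = g * pair e e';
  pair_nondeg : forall e, (forall e', pair e e' = 0) -> e = 0;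
  rho : E -> A -> A;
  rhoD : forall e e' f, rho (e + e') f = rho e f + rho e' f;
  rhoZ : forall (g : A) e f, rho (g *: e) f = g * rho e f;
  rho_add : forall e f f', rho e (f + f') = rho e f + rho e f';
  rho_scale : forall e (r : R) f, rho e (r%:A * f) = r%:A * rho e f;
  rho_Leibniz : forall e f f', rho e (f * f') = f * rho e f' + rho e f * f';
  (* D : C^oo(M) -> Gamma(E), <D f, e> = rho(e) f  (this is rho^* o d) *)
  Dop : A -> E;
  DopP : forall f e, pair (Dop f) e = rho e f;
  rho_rhostar : forall f g, rho (Dop f) g = 0;
  circ : E -> E -> E;
  circDl : forall e1 e1' e2, circ (e1 + e1') e2 = circ e1 e2 + circ e1' e2;
  circDr : forall e1 e2 e2', circ e1 (e2 + e2') = circ e1 e2 + circ e1 e2';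
  circZl : forall (r : R) e1 e2, circ (r%:A *: e1) e2 = r%:A *: circ e1 e2;
  circZr : forall (r : R) e1 e2, circ e1 (r%:A *: e2) = r%:A *: circ e1 e2;
  ax_i : forall e1 e2 f,
    rho (circ e1 e2) f = rho e1 (rho e2 f) - rho e2 (rho e1 f);
  ax_ii : forall e1 e2,
    pair (circ e1 e1) e2 = (2^-1 : R)%:A * rho e2 (pair e1 e1);
  ax_iii : forall e1 e2 e3,
    rho e1 (pair e2 e3) = pair (circ e1 e2) e3 + pair e2 (circ e1 e3)
}.

Definition Jacobiator (R : realFieldType) (A : comAlgType R) (E : lmodType A)
  (C : preCourant E) (e1 e2 e3 : E) : E :=
  circ C e1 (circ C e2 e3) - circ C (circ C e1 e2) e3 - circ C e2 (circ C e1 e3).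

(* Polarizing axiom (ii) gives <e1 o e2 + e2 o e1, e'> = rho(e') <e1, e2>.  For e1 = D f the
   right-hand side is rho(e') rho(e2) f, while axiom (iii) applied to <D f, e'> together with
   axiom (i) shows that <e2 o D f, e'> is already equal to it.  Hence <D f o e2, e'> = 0 for
   every e', so D f o e2 = 0 by nondegeneracy, and all three terms of J(D f, e2, e3) vanish. *)
From mathcomp Require Import all_boot all_order all_algebra.
From mathcomp Require Import ring.
Import GRing.Theory.
Local Open Scope ring_scope.

Lemma halfA_add (R : realFieldType) (A : comAlgType R) (x : A) :
  (2^-1 : R)%:A * x + (2^-1 : R)%:A * x = x.
Proof.
have halves : (2^-1 + 2^-1 : R) = 1 by field.
by rewrite -mulrDl -scalerDl halves scale1r mul1r.
Qed.

Section PreCourantCalculus.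

Variables (R : realFieldType) (A : comAlgType R) (E : lmodType A).
Variable C : preCourant E.

Lemma circ0l e : circ C 0 e = 0.
Proof. by apply: (addrI (circ C 0 e)); rewrite -circDl !addr0. Qed.

Lemma circ0r e : circ C e 0 = 0.
Proof. by apply: (addrI (circ C e 0)); rewrite -circDr !addr0. Qed.

Lemma pairDr e e' e'' : pair C e (e' + e'') = pair C e e' + pair C e e''.
Proof. by rewrite pair_sym pairD !(pair_sym C e). Qed.

Lemma pair_circ_sym e1 e2 e' :
  pair C (circ C e1 e2) e' + pair C (circ C e2 e1) e' = rho C e' (pair C e1 e2).
Proof.
have := ax_ii C (e1 + e2) e'.
rewrite !circDl !circDr !pairD !pairDr !rho_add !mulrDr !ax_ii (pair_sym C e2 e1).
set h11 := _ * rho C e' (pair C e1 e1); set h22 := _ * rho C e' (pair C e2 e2).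
move=> expanded; rewrite -[RHS]halfA_add.
transitivity (h11 + pair C (circ C e1 e2) e' + (pair C (circ C e2 e1) e' + h22) - h11 - h22).
  by ring.
by rewrite expanded; ring.
Qed.

Lemma pair_circ_Dr f e e' : pair C (circ C e (Dop C f)) e' = rho C e' (rho C e f).
Proof.
have := ax_iii C e (Dop C f) e'.
rewrite !DopP ax_i => /eqP; rewrite -subr_eq => /eqP <-.
by ring.
Qed.

Lemma circ_Dl f e : circ C (Dop C f) e = 0.
Proof.
apply: (@pair_nondeg _ _ _ C) => e'.
apply: (addIr (pair C (circ C e (Dop C f)) e')).
by rewrite pair_circ_sym DopP pair_circ_Dr add0r.
Qed.

End PreCourantCalculus.

Theorem lemma3p7 (R : realFieldType) (A : comAlgType R) (E : lmodType A)
  (C : preCourant E) (f : A) (e2 e3 : E) :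
  Jacobiator C (Dop C f) e2 e3 = 0.
Proof. by rewrite /Jacobiator !circ_Dl circ0l circ0r !subr0. Qed.
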